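(* Let $\Bbbk$ be a field of characteristic zero. The algebra $A=\Bbbk[x_1,x_2,x_3,x_4,x_5]/(x_1^4,x_2^4,x_3^4,x_4^4,x_5^4,x_1 x_2 x_3 x_4)$ fails the WLP by injectivity in degree $6$.
   Context: $\mathrm{HF}(A,k)=\dim_\Bbbk A_k$. $A$ fails the WLP by injectivity in degree $i$ if $\mathrm{HF}(A,i)\le\mathrm{HF}(A,i+1)$ and $\times(x_1+\cdots+x_5): A_i\to A_{i+1}$ is not injective. *)

From HB Require Import structures.
From mathcomp Require Import all_boot all_algebra.
From mathcomp Require Export mpoly.
Set Implicit Arguments. Unset Strict Implicit. Unset Printing Implicit Defensive.
Import GRing.Theory.
Local Open Scope ring_scope.

(* Polynomial ring S = k[x_1..x_n] is {mpoly R[n]}; variables x_{i+1} = 'X_i. *)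

Definition in_ideal (R : fieldType) (n m : nat) (gs : 'I_m -> {mpoly R[n]})
  (p : {mpoly R[n]}) : Prop :=
  exists g : 'I_m -> {mpoly R[n]}, p = \sum_(j < m) g j * gs j.

(* HF(S/(gs), d) = N : the degree-d component (S/I)_d = S_d / I_d has a basis
   of size N, i.e. there are N homogeneous degree-d polynomials whose classes
   are linearly independent modulo I and span S_d modulo I. *)
Definition HF_is (R : fieldType) (n m : nat) (gs : 'I_m -> {mpoly R[n]})
  (d N : nat) : Prop :=
  exists b : 'I_N -> {mpoly R[n]},
    [/\ forall i, b i \is d.-homog,
        forall c : 'I_N -> R,
          in_ideal gs (\sum_(i < N) c i *: b i) -> forall i, c i = 0
      & forall p : {mpoly R[n]}, p \is d.-homog ->
          exists c : 'I_N -> R, in_ideal gs (p - \sum_(i < N) c i *: b i)].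

Definition mult_not_injective (R : fieldType) (n m : nat)
  (gs : 'I_m -> {mpoly R[n]}) (l : {mpoly R[n]}) (i : nat) : Prop :=
  exists f : {mpoly R[n]},
    [/\ f \is i.-homog, ~ in_ideal gs f & in_ideal gs (l * f)].

Definition fails_WLP_by_injectivity (R : fieldType) (n m : nat)
  (gs : 'I_m -> {mpoly R[n]}) (i : nat) : Prop :=
  exists N1 N2 : nat,
    [/\ HF_is gs i N1, HF_is gs i.+1 N2, (N1 <= N2)%N
      & mult_not_injective gs (\sum_(j < n) 'X_j) i].

Definition gens_5p9 (R : fieldType) : 'I_6 -> {mpoly R[5]} :=
  fun j => if (j < 5)%N then 'X_(inord j) ^+ 4
           else 'X_(inord 0) * 'X_(inord 1) * 'X_(inord 2) * 'X_(inord 3).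

(* Since the ideal is monomial, the degree-d part of A has as a basis the standard
   monomials of degree d (those divisible by no generator), and a polynomial lies in
   the ideal iff all its coefficients on standard monomials vanish.  Hence
   HF(A,6) <= HF(A,7) is a count of exponent vectors, and non-injectivity amounts to
   an F of degree 6 with a nonzero standard coefficient such that every standard
   coefficient of (x_1+...+x_5) F vanishes.  Such an F can be chosen symmetric in the
   five variables, its coefficient at x^a depending only on the partition sort(a)
   (see [kernel_weight]); characteristic zero is used only to see that its
   coefficient 6 at x_1^3 x_2^3 is nonzero. *)

From HB Require Import structures.
From mathcomp Require Import all_boot all_algebra.
From mathcomp Require Import mpoly.
Set Implicit Arguments. Unset Strict Implicit. Unset Printing Implicit Defensive.
Import GRing.Theory.
Local Open Scope ring_scope.

Section CoefficientsOnMonomials.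
Variables (R : nzRingType) (n : nat) (s : seq 'X_{1..n}).
Implicit Type c : 'I_(size s) -> R.

Lemma mcoeff_sumX_nth c (i : 'I_(size s)) :
  uniq s -> (\sum_(k < size s) c k *: 'X_[nth 0%MM s k])@_(nth 0%MM s i) = c i.
Proof.
move=> uniq_s; rewrite raddf_sum (bigD1 i) //= mcoeffZ mcoeffX eqxx mulr1.
rewrite big1 ?addr0 // => k neq_ki; rewrite mcoeffZ mcoeffX nth_uniq //.
by rewrite (inj_eq val_inj) (negbTE neq_ki) mulr0.
Qed.

Lemma mcoeff_sumX_notin c mm :
  mm \notin s -> (\sum_(k < size s) c k *: 'X_[nth 0%MM s k])@_mm = 0.
Proof.
move=> s'mm; rewrite raddf_sum big1 // => k _ /=; rewrite mcoeffZ mcoeffX.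
by case: eqP => [eq_mm|]; rewrite ?mulr0 //; rewrite -eq_mm mem_nth in s'mm.
Qed.

End CoefficientsOnMonomials.

Section MonomialIdeal.
Variables (R : fieldType) (n m : nat) (gm : 'I_m -> 'X_{1..n}).
Variable gs : 'I_m -> {mpoly R[n]}.
Hypothesis gsE : forall j, gs j = 'X_[gm j].

Definition standard (mm : 'X_{1..n}) := [forall j, ~~ (gm j <= mm)%MM].

Lemma in_monomial_idealP (p : {mpoly R[n]}) :
  in_ideal gs p <-> (forall mm, standard mm -> p@_mm = 0).
Proof.
split=> [[g ->] mm std_mm|p_std0].
  rewrite raddf_sum big1 // => j _; rewrite gsE; apply/memN_msupp_eq0.
  rewrite (perm_mem (msuppMX _ _)); apply/mapP => -[mm' _ def_mm].
  by move/forallP/(_ j): std_mm; rewrite def_mm lem_addr.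
pose pick_gen mm := [pick j | gm j <= mm]%MM.
have pick_genP mm j : pick_gen mm = Some j -> (gm j <= mm)%MM.
  by rewrite /pick_gen; case: pickP => // j' le_j'mm [<-].
exists (fun j => \sum_(mm <- msupp p | pick_gen mm == Some j) p@_mm *: 'X_[mm - gm j]).
rewrite {1}(mpolyE p).
under [RHS]eq_bigr => j _.
  rewrite gsE big_distrl /=.
  under eq_bigr => mm /eqP pick_mm.
    rewrite -scalerAl -mpolyXD submK; last exact: pick_genP.
  over.
over.
under [RHS]eq_bigr do rewrite big_mkcond.
rewrite exchange_big; apply: eq_big_seq => mm _ /=.
case pick_mm: (pick_gen mm) => [j0|].
  rewrite (bigD1 j0) //= eqxx big1 ?addr0 // => j neq_jj0.
  by case: eqP => // -[eq_j]; rewrite eq_j eqxx in neq_jj0.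
rewrite big1 // p_std0 ?scale0r //; apply/forallP => j.
by move: pick_mm; rewrite /pick_gen; case: pickP => // /(_ j) ->.
Qed.

Lemma HF_is_standard d (s : seq 'X_{1..n}) :
  uniq s -> (forall mm, (mm \in s) = standard mm && (mdeg mm == d)) ->
  HF_is gs d (size s).
Proof.
move=> uniq_s mem_s.
have std_nth (k : 'I_(size s)) :
  standard (nth 0%MM s k) && (mdeg (nth 0%MM s k) == d) by rewrite -mem_s mem_nth.
exists (fun k => 'X_[nth 0%MM s k]); split.
- by move=> k; rewrite dhomogX; case/andP: (std_nth k).
- move=> c /in_monomial_idealP sum0 k; rewrite -(mcoeff_sumX_nth c k uniq_s).
  by case/andP: (std_nth k) => /sum0.
move=> p p_homog; exists (fun k => p@_(nth 0%MM s k)).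
apply/in_monomial_idealP => mm std_mm; rewrite mcoeffB.
have [s_mm|s'mm] := boolP (mm \in s).
  have idx_mm : (index mm s < size s)%N by rewrite index_mem.
  by rewrite -(nth_index 0%MM s_mm) (mcoeff_sumX_nth _ (Ordinal idx_mm)) ?subrr.
rewrite mcoeff_sumX_notin // subr0 (dhomog_nemf_coeff p_homog) //.
by move: s'mm; rewrite mem_s std_mm.
Qed.

End MonomialIdeal.

Section ExponentSequences.
Variable n : nat.

(* Multinomials do not reduce under [vm_compute], so all finite checks below are run
   on exponent sequences and transported along [mnm_of_seq], which reads missing
   entries as 0 and ignores entries beyond the n-th. *)
Definition mnm_of_seq (t : seq nat) : 'X_{1..n} := [multinom nth 0%N t i | i < n].

Lemma mnm_of_seqK (mm : 'X_{1..n}) : mnm_of_seq mm = mm.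
Proof. by apply/mnmP => i; rewrite mnmE -mnm_nth. Qed.

Lemma val_mnm_of_seq t : size t = n -> mnm_of_seq t = t :> seq nat.
Proof.
move=> size_t; apply: (@eq_from_nth _ 0%N) => [|i]; first by rewrite size_tuple.
by rewrite size_tuple => lt_in; rewrite -(mnm_nth 0%N _ (Ordinal lt_in)) mnmE.
Qed.

Lemma mnm_of_seq_inj : {in [pred t | size t == n] &, injective mnm_of_seq}.
Proof.
move=> a b /eqP size_a /eqP size_b eq_ab.
by rewrite -(val_mnm_of_seq size_a) eq_ab val_mnm_of_seq.
Qed.

Lemma mdeg_mnm_of_seq t : size t = n -> mdeg (mnm_of_seq t) = sumn t.
Proof. by move=> size_t; rewrite /mdeg -sumnE val_mnm_of_seq. Qed.

Definition seq_lem (a b : seq nat) :=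
  all (fun i => nth 0 a i <= nth 0 b i)%N (iota 0 n).

Lemma lem_mnm_of_seq a b : (mnm_of_seq a <= mnm_of_seq b)%MM = seq_lem a b.
Proof.
apply/mnm_lepP/allP => [le_ab i | le_ab i].
  by rewrite mem_iota add0n => lt_in; have := le_ab (Ordinal lt_in); rewrite !mnmE.
by rewrite !mnmE; apply: le_ab; rewrite mem_iota ltn_ord.
Qed.

Lemma mnm_of_seq_incr_nth (j : 'I_n) t :
  mnm_of_seq (incr_nth t j) = (U_(j) + mnm_of_seq t)%MM.
Proof. by apply/mnmP => i; rewrite mnmDE !mnmE nth_incr_nth. Qed.

End ExponentSequences.

Fixpoint seqs_below (b k : nat) : seq (seq nat) :=
  if k is k'.+1 then [seq e :: t | e <- iota 0 b, t <- seqs_below b k'] else [:: [::]].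

Lemma mem_seqs_below b k t :
  (t \in seqs_below b k) = (size t == k) && all (fun e => e < b)%N t.
Proof.
elim: k t => [|k IHk] [|e t] //=.
  by apply/negbTE/allpairsP => -[[? ?] /= [_ _]].
apply/allpairsP/idP => [[[e' t'] /= [e'_b t'_b [-> ->]]]|].
  by move: e'_b t'_b; rewrite mem_iota IHk /= eqSS add0n => -> /andP[-> ->].
rewrite eqSS => /and3P[size_t e_b t_b]; exists (e, t); split=> //.
  by rewrite mem_iota.
by rewrite IHk size_t.
Qed.

Section Terms.
Variables (R : comNzRingType) (n : nat).
Implicit Type T : seq (seq nat * int).

Definition mpoly_of_terms T : {mpoly R[n]} :=
  \sum_(x <- T) x.2%:~R *: 'X_[mnm_of_seq n x.1].

Definition shift_terms (j : nat) T := [seq (incr_nth x.1 j, x.2) | x <- T].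

Lemma mulX_mpoly_of_terms (j : 'I_n) T :
  'X_j * mpoly_of_terms T = mpoly_of_terms (shift_terms j T).
Proof.
rewrite /mpoly_of_terms big_map mulr_sumr; apply: eq_bigr => x _ /=.
by rewrite -scalerAr -mpolyXD mnm_of_seq_incr_nth.
Qed.

Lemma sumX_mul_mpoly_of_terms T :
  (\sum_(j < n) 'X_j) * mpoly_of_terms T =
  mpoly_of_terms (flatten [seq shift_terms j T | j <- iota 0 n]).
Proof.
have -> : iota 0 n = index_iota 0 n by rewrite /index_iota subn0.
rewrite mulr_suml {2}/mpoly_of_terms big_flatten big_map big_mkord.
by apply: eq_bigr => j _; rewrite mulX_mpoly_of_terms.
Qed.

Lemma mcoeff_mpoly_of_terms T t :
  all (fun x => size x.1 == n) T -> size t = n ->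
  (mpoly_of_terms T)@_(mnm_of_seq n t) = (\sum_(x <- T | x.1 == t) x.2)%:~R.
Proof.
move=> /allP size_T size_t; rewrite raddf_sum rmorph_sum [RHS]big_mkcond /=.
apply: eq_big_seq => x /size_T /eqP size_x; rewrite mcoeffZ mcoeffX.
rewrite (inj_in_eq (@mnm_of_seq_inj n)) ?inE ?size_x ?size_t //.
by case: eqP; rewrite ?mulr1 ?mulr0.
Qed.

Lemma mpoly_of_terms_homog d T :
  all (fun x => (size x.1 == n) && (sumn x.1 == d)) T -> mpoly_of_terms T \is d.-homog.
Proof.
move=> /allP homog_T; rewrite /mpoly_of_terms big_seq; apply: rpred_sum => x /homog_T.
case/andP => /eqP size_x /eqP deg_x.
by rewrite rpredZ // dhomogX /= mdeg_mnm_of_seq ?deg_x.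
Qed.

End Terms.

Definition gens_exps : seq (seq nat) :=
  [:: [:: 4; 0; 0; 0; 0]; [:: 0; 4; 0; 0; 0]; [:: 0; 0; 4; 0; 0];
      [:: 0; 0; 0; 4; 0]; [:: 0; 0; 0; 0; 4]; [:: 1; 1; 1; 1; 0]]%N.

Definition gens_mnm (j : 'I_6) : 'X_{1..5} := mnm_of_seq 5 (nth [::] gens_exps j).

Lemma gens_5p9E (R : fieldType) j : gens_5p9 R j = 'X_[gens_mnm j].
Proof.
rewrite /gens_5p9; case: j => -[|[|[|[|[|[|//]]]]]] lt_j6 /=;
  rewrite ?mpolyXn -?mpolyXD; congr 'X_[_]; apply/mnmP => -[[|[|[|[|[|//]]]]] lt_i5];
  by rewrite ?mulmnE ?mnmDE !mnmE ?mnm1E -?val_eqE /= ?inordK.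
Qed.

Definition std_exp (t : seq nat) := all (fun g => ~~ seq_lem 5 g t) gens_exps.

Lemma standard_mnm_of_seq t : standard gens_mnm (mnm_of_seq 5 t) = std_exp t.
Proof.
apply/forallP/allP => [std_t g gens_g | std_t j]; last first.
  by rewrite lem_mnm_of_seq std_t // mem_nth.
have lt_g6 : (index g gens_exps < 6)%N by rewrite index_mem.
by have := std_t (Ordinal lt_g6); rewrite lem_mnm_of_seq /= nth_index.
Qed.

Lemma std_exp_seqs_below t : size t = 5%N -> std_exp t -> t \in seqs_below 4 5.
Proof.
rewrite mem_seqs_below; case: t => [|a [|b [|c [|d [|e []]]]]] // _.
rewrite /std_exp /seq_lem /= !andbT -!leqNgt => /and5P[? ? ? ? /andP[? _]].
by apply/and5P; split.
Qed.

Lemma standard_std_exp (mm : 'X_{1..5}) : standard gens_mnm mm -> std_exp mm.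
Proof. by rewrite -{1}(mnm_of_seqK mm) standard_mnm_of_seq. Qed.

Definition std_exps_deg d := [seq t <- seqs_below 4 5 | std_exp t && (sumn t == d)].

Definition std_monomials d := map (mnm_of_seq 5) (std_exps_deg d).

Lemma mem_std_monomials d mm :
  (mm \in std_monomials d) = standard gens_mnm mm && (mdeg mm == d).
Proof.
apply/mapP/andP => [[t] | [std_mm /eqP deg_mm]].
  rewrite mem_filter mem_seqs_below.
  move=> /andP[/andP[std_t /eqP sum_t] /andP[/eqP size_t _]] ->.
  by rewrite standard_mnm_of_seq mdeg_mnm_of_seq // sum_t.
exists (mm : seq nat); last by rewrite mnm_of_seqK.
have std_t := standard_std_exp std_mm.
rewrite mem_filter std_t std_exp_seqs_below ?size_tuple // andbT.
by rewrite -deg_mm /mdeg sumnE eqxx.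
Qed.

Lemma uniq_std_monomials d : uniq (std_monomials d).
Proof.
rewrite map_inj_in_uniq; first by apply: filter_uniq; vm_compute.
by apply: sub_in2 (@mnm_of_seq_inj 5) => t; rewrite mem_filter mem_seqs_below => /and3P[].
Qed.

Lemma HF_gens_5p9 (R : fieldType) d : HF_is (gens_5p9 R) d (size (std_exps_deg d)).
Proof.
rewrite -(size_map (mnm_of_seq 5)).
apply: (HF_is_standard (gens_5p9E R)).
  exact: uniq_std_monomials.
exact: mem_std_monomials.
Qed.

Lemma HF_6_le_7 : (size (std_exps_deg 6) <= size (std_exps_deg 7))%N.
Proof. by vm_compute. Qed.

Definition kernel_weight (t : seq nat) : int :=
  match sort geq t with
  | [:: 3; 3; 0; 0; 0]%N => 6
  | [:: 2; 2; 2; 0; 0]%N => 6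
  | [:: 3; 1; 1; 1; 0]%N => 8
  | [:: 3; 2; 1; 0; 0]%N => -3
  | [:: 2; 2; 1; 1; 0]%N => -2
  | _ => 0
  end%Z.

(* Non-standard monomials are included too; they are zero in A anyway. *)
Definition kernel_terms : seq (seq nat * int) :=
  [seq (t, kernel_weight t) | t <- seqs_below 4 5 & sumn t == 6%N].

Definition sumX_kernel_terms := flatten [seq shift_terms j kernel_terms | j <- iota 0 5].

Lemma kernel_terms_homog :
  all (fun x => (size x.1 == 5) && (sumn x.1 == 6))%N kernel_terms.
Proof. by vm_compute. Qed.

Lemma sumX_kernel_terms_size : all (fun x => size x.1 == 5)%N sumX_kernel_terms.
Proof. by vm_compute. Qed.

Lemma kernel_terms_coef33 :
  \sum_(x <- kernel_terms | x.1 == [:: 3; 3; 0; 0; 0]%N) x.2 = 6.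
Proof. by rewrite unlock; vm_compute. Qed.

Lemma sumX_kernel_terms_std :
  all (fun t => std_exp t ==> (\sum_(x <- sumX_kernel_terms | x.1 == t) x.2 == 0))
      (seqs_below 4 5).
Proof. by rewrite unlock; vm_compute. Qed.

Theorem lemma5p9 (R : fieldType) (charR0 : [pchar R] =i pred0) :
  fails_WLP_by_injectivity (gens_5p9 R) 6.
Proof.
pose F : {mpoly R[5]} := mpoly_of_terms R 5 kernel_terms.
have idealP := in_monomial_idealP (gens_5p9E R).
exists (size (std_exps_deg 6)), (size (std_exps_deg 7)).
split; [exact: HF_gens_5p9 | exact: HF_gens_5p9 | exact: HF_6_le_7 |].
exists F; split.
- exact: mpoly_of_terms_homog kernel_terms_homog.
- have size_kernel : all (fun x => size x.1 == 5%N) kernel_terms.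
    by apply/allP => x /(allP kernel_terms_homog) /andP[].
  move/idealP/(_ (mnm_of_seq 5 [:: 3; 3; 0; 0; 0]%N)).
  rewrite standard_mnm_of_seq mcoeff_mpoly_of_terms ?kernel_terms_coef33 //.
  by move/(_ isT)/eqP; rewrite -pmulrn ((pcharf0P R).1 charR0).
apply/idealP => mm std_mm; rewrite sumX_mul_mpoly_of_terms -(mnm_of_seqK mm).
rewrite mcoeff_mpoly_of_terms ?size_tuple ?sumX_kernel_terms_size //.
have std_t := standard_std_exp std_mm.
have := allP sumX_kernel_terms_std _ (std_exp_seqs_below (size_tuple mm) std_t).
by rewrite std_t => /eqP ->.
Qed.
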